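(* Let $p,q>0$ and $\alpha,\beta,\nu,\gamma\in\mathbb{R}$. Let $a,a^{\dagger},N,K$ be elements of an associative unital algebra satisfying $$aa^{\dagger}-p^{\nu}a^{\dagger}a=(1+2\gamma K)\,q^{\alpha N+\beta},\qquad [N,a^{\dagger}]=a^{\dagger},\qquad Ka^{\dagger}=-a^{\dagger}K,$$ where $q^{\alpha N+\beta}$ is an element such that, as a consequence of $[N,a^\dagger]=a^\dagger$, $q^{\alpha N+\beta}a^{\dagger}=a^{\dagger}q^{\alpha(N+1)+\beta}=q^{\alpha}\,a^{\dagger}q^{\alpha N+\beta}$. Then for every integer $n\geq 1$, $$a(a^{\dagger})^{n}-p^{n\nu}(a^{\dagger})^{n}a=[n;\alpha,\beta,\nu;\gamma K]\,(a^{\dagger})^{n-1}q^{\alpha N+\beta},$$ where $$[n;\alpha,\beta,\nu;\gamma K]=\begin{cases}\dfrac{p^{n\nu}-q^{n\alpha}}{p^{\nu}-q^{\alpha}}+2\gamma K\,\dfrac{q^{n\alpha}-(-1)^{n}p^{n\nu}}{p^{\nu}+q^{\alpha}}, & \text{if } p^{\nu}\neq q^{\alpha},\\[2ex] nq^{\alpha(n-1)}+2\gamma K\,q^{\alpha(n-1)}\,\dfrac{1-(-1)^{n}}{2}, & \text{if } p^{\nu}=q^{\alpha}.\end{cases}$$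
   Context: These are relations of the $(p,q;\alpha,\beta,\nu;\gamma)$-deformed oscillator algebra generated by $a,a^{\dagger},N,K$ with $aa^{\dagger}-p^{\nu}a^{\dagger}a=(1+2\gamma K)q^{\alpha N+\beta}$, $[N,a]=-a$, $[N,a^\dagger]=a^\dagger$, $Ka=-aK$, $Ka^\dagger=-a^\dagger K$, $[N,K]=0$. Scalars are identified with multiples of the unit. *)

From HB Require Import structures.
From mathcomp Require Import all_boot all_order all_algebra.
From mathcomp Require Import reals exp.
Set Implicit Arguments. Unset Strict Implicit. Unset Printing Implicit Defensive.
Import Order.TTheory GRing.Theory Num.Theory.
Local Open Scope ring_scope.

Definition deformed_bracket (R : realType) (A : algType R)
    (p q alpha nu gamma : R) (K : A) (n : nat) : A :=
  if p `^ nu != q `^ alpha then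
    ((p `^ (n%:R * nu) - q `^ (n%:R * alpha)) / (p `^ nu - q `^ alpha))%:A
    + (2 * gamma * ((q `^ (n%:R * alpha) - (-1) ^+ n * p `^ (n%:R * nu))
                     / (p `^ nu + q `^ alpha))) *: K
  else
    (n%:R * q `^ (alpha * (n%:R - 1)))%:A
    + (2 * gamma * q `^ (alpha * (n%:R - 1)) * ((1 - (-1) ^+ n) / 2)) *: K.

From HB Require Import structures.
From mathcomp Require Import all_boot all_order all_algebra.
From mathcomp Require Import reals exp.
From mathcomp Require Import ring.
Set Implicit Arguments. Unset Strict Implicit. Unset Printing Implicit Defensive.
Import Order.TTheory GRing.Theory Num.Theory.
Local Open Scope ring_scope.

(* Write b for a^dagger, P = p^nu, r = q^alpha and D_n = a b^n - P^n b^n a.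
   Then D_(n+1) = D_n b + P^n b^n D_1, and moving b^n past (1 + 2gK) Q flips
   the sign of K n times, while moving Q past b scales by r; so
   D_(n+1) = B_(n+1) b^n Q with B_(n+1) = r B_n + P^n (1 + 2g(-1)^n K).
   Hence B_n = [n]_(P,r) + 2g [n]_(-P,r) K, where [n]_(x,y) is the
   two-parameter number sum_(i<n) x^i y^(n-1-i); its closed forms
   (x^n - y^n)/(x - y) and n x^(n-1) give the two cases of the bracket. *)

Fixpoint pq_number (R : pzRingType) (x y : R) (n : nat) : R :=
  if n is m.+1 then x ^+ m + y * pq_number x y m else 0.

Lemma pq_number_diag (R : comPzRingType) (x : R) (n : nat) :
  pq_number x x n.+1 = n.+1%:R * x ^+ n.
Proof.
elim: n => [|n IH]; first by rewrite /= mulr0 addr0 mul1r.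
by rewrite -[LHS]/(x ^+ n.+1 + x * pq_number x x n.+1) IH -[n.+2%:R]natr1 exprS; ring.
Qed.

Lemma pq_number_closed (F : fieldType) (x y : F) (n : nat) :
  x != y -> pq_number x y n = (x ^+ n - y ^+ n) / (x - y).
Proof.
rewrite -subr_eq0 => xy; elim: n => [|n IH] /=; first by rewrite subrr mul0r.
by rewrite IH !exprS; field.
Qed.

Lemma exprn_anticomm (R : pzRingType) (A : algType R) (x k : A) (n : nat) :
  k * x = - (x * k) -> x ^+ n * k = (-1) ^+ n *: (k * x ^+ n).
Proof.
move=> kx; elim: n => [|n IH]; first by rewrite !expr0 mul1r mulr1 scale1r.
have xk : x * k = - (k * x) by rewrite kx opprK.
rewrite exprS -mulrA IH -scalerAr (mulrA x k) xk mulNr -mulrA.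
by rewrite exprS mulN1r scaleNr scalerN.
Qed.

Lemma sub_scale_commutator_exprS (R : comPzRingType) (A : algType R)
    (P : R) (a x : A) (n : nat) :
  a * x ^+ n.+1 - P ^+ n.+1 *: (x ^+ n.+1 * a)
  = (a * x ^+ n - P ^+ n *: (x ^+ n * a)) * x
    + P ^+ n *: (x ^+ n * (a * x - P *: (x * a))).
Proof.
rewrite mulrBl mulrBr scalerBr -scalerAl !mulrA addrA subrK -scalerAr scalerA.
by rewrite -mulrA -exprSr -exprSr mulrA -exprSr.
Qed.

Section DeformedOscillator.

Variables (R : comPzRingType) (A : algType R) (P r g : R) (a ad K Q : A).
Hypothesis aadE : a * ad - P *: (ad * a) = (1 + (2 * g) *: K) * Q.
Hypothesis Kad : K * ad = - (ad * K).
Hypothesis Qad : Q * ad = r *: (ad * Q).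

Definition deformed_coef (n : nat) : A :=
  (pq_number P r n)%:A + (2 * g * pq_number (- P) r n) *: K.

Lemma deformed_coefS (n : nat) :
  deformed_coef n.+1
  = r *: deformed_coef n + P ^+ n *: (1 + (2 * g * (-1) ^+ n) *: K).
Proof.
rewrite /deformed_coef /= !scalerDr !scalerA addrACA -!scalerDl.
by congr (_ *: _ + _ *: _); [exact: addrC | rewrite [(- P) ^+ n]exprNn; ring].
Qed.

Lemma deformed_commutator_exprS (n : nat) :
  a * ad ^+ n.+1 - P ^+ n.+1 *: (ad ^+ n.+1 * a)
  = deformed_coef n.+1 * ad ^+ n * Q.
Proof.
have coef0 : deformed_coef 0 = 0 by rewrite /deformed_coef /= mulr0 !scale0r addr0.
have Kadn m s : ad ^+ m * (1 + s *: K) = (1 + (s * (-1) ^+ m) *: K) * ad ^+ m.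
  rewrite mulrDr mulr1 -scalerAr exprn_anticomm // scalerA mulrDl mul1r.
  by rewrite -scalerAl mulrC.
elim: n => [|n IH].
  by rewrite deformed_coefS coef0 scaler0 add0r !expr1 aadE expr0 mulr1 mulr1 scale1r.
have Qadn X : X * ad ^+ n * Q * ad = r *: (X * ad ^+ n.+1 * Q).
  by rewrite -mulrA Qad -scalerAr exprSr !mulrA.
rewrite sub_scale_commutator_exprS IH aadE mulrA Kadn Qadn.
rewrite [deformed_coef n.+2]deformed_coefS (mulrDl (r *: _)) (mulrDl (r *: _ * _)).
by rewrite -!scalerAl.
Qed.

End DeformedOscillator.

Lemma powR_natrM (R : realType) (x y : R) (k : nat) :
  x `^ (k%:R * y) = (x `^ y) ^+ k.
Proof. by rewrite mulrC powRrM powR_mulrn // powR_ge0. Qed.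

Lemma deformed_bracketE (R : realType) (A : algType R)
    (p q alpha nu gamma : R) (K : A) (n : nat) :
  0 < p -> 0 < q ->
  deformed_bracket p q alpha nu gamma K n.+1
  = deformed_coef (p `^ nu) (q `^ alpha) gamma K n.+1.
Proof.
move=> p0 q0; rewrite /deformed_bracket /deformed_coef.
have -> : alpha * (n.+1%:R - 1) = n%:R * alpha by rewrite -natr1 addrK mulrC.
rewrite !powR_natrM.
set P := p `^ nu; set r := q `^ alpha.
have P0 : 0 < P by apply: powR_gt0.
have r0 : 0 < r by apply: powR_gt0.
have Nrr : - P != r.
  by rewrite eq_sym -subr_eq0 opprK gt_eqF // addr_gt0.
rewrite (pq_number_closed _ Nrr) [(- P) ^+ _]exprNn.
case: eqP => [<-|/eqP PNr].
- rewrite pq_number_diag !exprS; congr (_ *: _ + _ *: _); field.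
  by rewrite -opprD oppr_eq0 gt_eqF // addr_gt0.
- rewrite (pq_number_closed _ PNr) /= !exprS; congr (_ *: _ + _ *: _); field.
  by rewrite -opprD oppr_eq0 gt_eqF // addr_gt0.
Qed.

Theorem proposition3 (R : realType) (A : algType R)
    (p q alpha beta nu gamma : R) (a ad N K Q : A) :
  0 < p -> 0 < q ->
  a * ad - p `^ nu *: (ad * a) = (1 + (2 * gamma) *: K) * Q ->
  N * ad - ad * N = ad ->
  K * ad = - (ad * K) ->
  Q * ad = q `^ alpha *: (ad * Q) ->
  forall n : nat, (1 <= n)%N ->
    a * ad ^+ n - p `^ (n%:R * nu) *: (ad ^+ n * a)
    = deformed_bracket p q alpha nu gamma K n * ad ^+ n.-1 * Q.
Proof.
(* [N, ad] = ad is only needed to justify the given relation between Q and ad. *)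
move=> p0 q0 aadE _ Kad Qad [//|n] _.
by rewrite powR_natrM deformed_bracketE // (deformed_commutator_exprS aadE Kad Qad).
Qed.
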